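(* Let $X$ be a Stone space and $G$ a topological subgroup of $\mathrm{Homeo}(X)$. Then: (1) the action $\alpha:G\times V\to V$, $\alpha(g,A)=g(A)$, induces a topological group embedding $i_\alpha:G\hookrightarrow \mathrm{Aut}(V)$; (2) the evaluation map $\delta:X\to V^*$, $x\mapsto\delta_x$, $\delta_x(f)=f(x)$, is a topological embedding which is $G$-equivariant (with respect to the action $\beta$ below); (3) the action $\beta:G\times V^*\to V^*$, $(gf)(A)=f(g^{-1}(A))$, is continuous and induces a topological group embedding $i_\beta:G\hookrightarrow\mathrm{Aut}(V^* )$; (4) the pair $\psi=(\alpha,\beta)$ is a $t$-exact birepresentation of $G$ on the evaluation map $w:V\times V^*\to\mathbb{Z}_2$, $w(A,f)=f(A)$.
   Context: A Stone space is a compact zero-dimensional Hausdorff space; $\mathrm{Homeo}(X)$ carries the compact-open topology. $V=C(X,\mathbb{Z}_2)$, identified with the group of clopen subsets of $X$ under symmetric difference, is discrete; $V^*=\mathrm{Hom}(V,\mathbb{Z}_2)$ carries the topology of pointwise convergence (compact). For a locally compact group $Y$, $\mathrm{Aut}(Y)$ carries the Birkhoff topology, with local base at the identity the sets $\{f\in\mathrm{Aut}(Y): f(y)\in Oy,\ f^{-1}(y)\in Oy\ \forall y\in K\}$ ($K$ compact, $O$ a neighborhood of the identity); for discrete $Y$ it is the pointwise topology and for compact $Y$ the compact-open topology. Given a continuous biadditive map $w:E\times F\to A$ of abelian topological groups, a continuous birepresentation of a topological group $G$ on $w$ is a pair $(\alpha_1,\alpha_2)$ of continuous actions of $G$ by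 automorphisms on $E$ and on $F$ with $w(gx,gf)=w(x,f)$. It is $t$-exact if $\ker\alpha_1\cap\ker\alpha_2=\{e\}$ and for no strictly coarser Hausdorff group topology on $G$ do both actions remain continuous. *)

From Stdlib Require Import List.

Definition set (X : Type) := X -> Prop.
Definition topology (X : Type) := set (set X).

Definition is_topology {X} (T : topology X) : Prop :=
  T (fun _ => True) /\
  (forall U W, T U -> T W -> T (fun x => U x /\ W x)) /\
  (forall F : set (set X), (forall U, F U -> T U) ->
     T (fun x => exists U, F U /\ U x)).

Definition continuous {X Y} (TX : topology X) (TY : topology Y) (f : X -> Y) :=
  forall W, TY W -> TX (fun x => W (f x)).

Definition hausdorff {X} (T : topology X) :=
  forall x y : X, x <> y ->
    exists U W, T U /\ T W /\ U x /\ W y /\ forall z, ~ (U z /\ W z).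

Definition compact_set {X} (T : topology X) (K : set X) :=
  forall F : set (set X), (forall U, F U -> T U) ->
    (forall x, K x -> exists U, F U /\ U x) ->
    exists l : list (set X), (forall U, In U l -> F U) /\
      (forall x, K x -> exists U, In U l /\ U x).

Definition compact {X} (T : topology X) := compact_set T (fun _ => True).

Definition clopen {X} (T : topology X) (A : set X) := T A /\ T (fun x => ~ A x).

Definition zero_dimensional {X} (T : topology X) :=
  forall U x, T U -> U x ->
    exists A, clopen T A /\ A x /\ forall y, A y -> U y.

Definition stone_space {X} (T : topology X) :=
  is_topology T /\ compact T /\ hausdorff T /\ zero_dimensional T.

Definition generated {X} (S : set (set X)) : topology X := fun U =>
  forall x, U x -> exists l : list (set X),
    (forall B, In B l -> S B) /\ (forall B, In B l -> B x) /\
    (forall y, (forall B, In B l -> B y) -> U y).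

Definition discrete (X : Type) : topology X := fun _ => True.

Definition subspace {Y} (S : set Y) (T : topology Y) : topology Y := fun U =>
  (forall y, U y -> S y) /\ exists W, T W /\ forall y, S y -> (U y <-> W y).

Definition topology_on {Y} (S : set Y) (T : topology Y) :=
  (forall U, T U -> forall y, U y -> S y) /\ T S /\
  (forall U W, T U -> T W -> T (fun x => U x /\ W x)) /\
  (forall F : set (set Y), (forall U, F U -> T U) ->
     T (fun x => exists U, F U /\ U x)).

Definition hausdorff_on {Y} (S : set Y) (T : topology Y) :=
  forall x y, S x -> S y -> x <> y ->
    exists U W, T U /\ T W /\ U x /\ W y /\ forall z, ~ (U z /\ W z).

Definition prod_open {A B} (TA : topology A) (TB : topology B) (W : A -> B -> Prop) :=
  forall a b, W a b -> exists U1 U2, TA U1 /\ TB U2 /\ U1 a /\ U2 b /\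
    forall x y, U1 x -> U2 y -> W x y.

(* a homeomorphism is represented by the pair (h, h^{-1}) *)
Definition HX (X : Type) := ((X -> X) * (X -> X))%type.
Definition idH {X} : HX X := (fun x => x, fun x => x).
Definition mulH {X} (p q : HX X) : HX X :=
  (fun x => fst p (fst q x), fun x => snd q (snd p x)).
Definition invH {X} (p : HX X) : HX X := (snd p, fst p).

Definition is_homeo {X} (T : topology X) (p : HX X) :=
  (forall x, fst p (snd p x) = x) /\ (forall x, snd p (fst p x) = x) /\
  continuous T T (fst p) /\ continuous T T (snd p).

Definition compact_open {X} (T : topology X) : topology (HX X) :=
  generated (fun B => exists K U, compact_set T K /\ T U /\
    forall p, B p <-> (forall x, K x -> U (fst p x))).

Definition Homeo_top {X} (T : topology X) : topology (HX X) :=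
  subspace (is_homeo T) (compact_open T).

Definition is_subgroup {X} (T : topology X) (G : set (HX X)) :=
  (forall p, G p -> is_homeo T p) /\ G idH /\
  (forall p q, G p -> G q -> G (mulH p q)) /\ (forall p, G p -> G (invH p)).

Definition G_top {X} (T : topology X) (G : set (HX X)) : topology (HX X) :=
  subspace G (Homeo_top T).

Definition group_topology_on {X} (G : set (HX X)) (tau : topology (HX X)) :=
  topology_on G tau /\
  (forall U, tau U -> prod_open tau tau (fun a b => G a /\ G b /\ U (mulH a b))) /\
  (forall U, tau U -> tau (fun a => G a /\ U (invH a))).

(* Z2 = bool with xorb *)
Definition V {X} (T : topology X) := {A : X -> bool | clopen T (fun x => A x = true)}.
(* c = a + b in V *)
Definition addV {X} {T : topology X} (a b c : V T) :=
  forall x, proj1_sig c x = xorb (proj1_sig a x) (proj1_sig b x).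
Definition zeroV {X} {T : topology X} (a : V T) := forall x, proj1_sig a x = false.
Definition V_top {X} (T : topology X) : topology (V T) := fun _ => True.

Definition Vs {X} (T : topology X) :=
  {f : V T -> bool | forall a b c, addV a b c -> f c = xorb (f a) (f b)}.
Definition addVs {X} {T : topology X} (a b c : Vs T) :=
  forall A, proj1_sig c A = xorb (proj1_sig a A) (proj1_sig b A).
Definition zeroVs {X} {T : topology X} (a : Vs T) := forall A, proj1_sig a A = false.
Definition Vs_top {X} (T : topology X) : topology (Vs T) :=
  generated (fun B => exists (A : V T) (b : bool),
    forall f : Vs T, B f <-> proj1_sig f A = b).

Definition wpair {X} {T : topology X} (A : V T) (f : Vs T) : bool := proj1_sig f A.

(* addR a b c  means  c = a + b *)
Definition is_hom {Y} (addR : Y -> Y -> Y -> Prop) (phi : Y -> Y) :=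
  forall a b c, addR a b c -> addR (phi a) (phi b) (phi c).

Definition Aut {Y} (TY : topology Y) (addR : Y -> Y -> Y -> Prop) :=
  {p : (Y -> Y) * (Y -> Y) |
    (forall y, fst p (snd p y) = y) /\ (forall y, snd p (fst p y) = y) /\
    is_hom addR (fst p) /\ is_hom addR (snd p) /\
    continuous TY TY (fst p) /\ continuous TY TY (snd p)}.
Definition autf {Y} {TY : topology Y} {addR} (f : Aut TY addR) := fst (proj1_sig f).
Definition autg {Y} {TY : topology Y} {addR} (f : Aut TY addR) := snd (proj1_sig f).

Definition nbhd {Y} (TY : topology Y) (P : set Y) (O : set Y) :=
  exists U, TY U /\ (forall z, P z -> U z) /\ forall y, U y -> O y.

(* Birkhoff topology: U open iff for every f in U some basic neighbourhood
   f N(K,O) is contained in U, where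
   N(K,O) = {h | h(y) in O+y, h^{-1}(y) in O+y for all y in K}. *)
Definition birkhoff {Y} (TY : topology Y) (addR : Y -> Y -> Y -> Prop)
    (zeroP : set Y) : topology (Aut TY addR) := fun U =>
  forall f, U f -> exists K O, compact_set TY K /\ nbhd TY zeroP O /\
    forall k : Aut TY addR,
      (forall y, K y ->
         (exists o, O o /\ addR o y (autg f (autf k y))) /\
         (exists o, O o /\ addR o y (autg k (autf f y)))) -> U k.

Definition top_group_embedding {X} (G : set (HX X)) (TG : topology (HX X))
    {Y} {TY : topology Y} {addR} (TA : topology (Aut TY addR))
    (i : HX X -> Aut TY addR) :=
  (forall g h, G g -> G h -> forall y,
      autf (i (mulH g h)) y = autf (i g) (autf (i h) y)) /\
  (forall g h, G g -> G h -> i g = i h -> g = h) /\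
  (forall W, TA W -> TG (fun g => G g /\ W (i g))) /\
  (forall U, TG U -> exists W, TA W /\ forall g, G g -> (U g <-> W (i g))).

Definition top_embedding {X Y} (TX : topology X) (TY : topology Y) (d : X -> Y) :=
  (forall x y, d x = d y -> x = y) /\ continuous TX TY d /\
  (forall U, TX U -> exists W, TY W /\ forall x, U x <-> W (d x)).

Definition action_continuous {X} (G : set (HX X)) (TG : topology (HX X))
    {Y} (TY : topology Y) (act : HX X -> Y -> Y) :=
  forall W, TY W -> prod_open TG TY (fun g y => G g /\ W (act g y)).

Definition action_by_automorphisms {X} (G : set (HX X)) {Y} (TY : topology Y)
    (addR : Y -> Y -> Y -> Prop) (act : HX X -> Y -> Y) :=
  (forall y, act idH y = y) /\
  (forall g h y, G g -> G h -> act (mulH g h) y = act g (act h y)) /\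
  (forall g, G g -> is_hom addR (act g) /\ continuous TY TY (act g)).

Definition birepresentation {X} (G : set (HX X)) (TG : topology (HX X))
    {E F} (TE : topology E) (TF : topology F) addE addF
    (w : E -> F -> bool) (a1 : HX X -> E -> E) (a2 : HX X -> F -> F) :=
  action_by_automorphisms G TE addE a1 /\ action_by_automorphisms G TF addF a2 /\
  action_continuous G TG TE a1 /\ action_continuous G TG TF a2 /\
  (forall g x f, G g -> w (a1 g x) (a2 g f) = w x f).

Definition t_exact_birepresentation {X} (G : set (HX X)) (TG : topology (HX X))
    {E F} (TE : topology E) (TF : topology F) addE addF
    (w : E -> F -> bool) (a1 : HX X -> E -> E) (a2 : HX X -> F -> F) :=
  birepresentation G TG TE TF addE addF w a1 a2 /\
  (forall g, G g -> (forall x, a1 g x = x) -> (forall f, a2 g f = f) -> g = idH) /\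
  (forall tau, group_topology_on G tau -> hausdorff_on G tau ->
     (forall U, tau U -> TG U) -> (exists U, TG U /\ ~ tau U) ->
     ~ (action_continuous G tau TE a1 /\ action_continuous G tau TF a2)).

(* For a Stone space the clopen sets form a base, and every compact subset of an open
   set lies in a clopen subset of it.  Hence a subbasic compact-open neighbourhood
   [{h | h(K) ⊆ U}] of [g] contains a set [{h | h(B) = g(B)}] with [B] clopen, and
   conversely [{h | h(B) = A}] is the intersection of the subbasic sets [h(B) ⊆ A] and
   [h(X \ B) ⊆ X \ A].  So the topology of [G] is that of pointwise convergence of the
   action on the discrete group [V] of clopens.  Each claim reduces to this: the Birkhoff
   topology on [Aut(V)] is pointwise convergence on finitely many clopens; on [Aut (Vs T)]
   one tests against the compact [delta(X)] and a basic neighbourhood of zero, which again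
   amounts to finitely many conditions [h(B) = A]; [delta] is an embedding because clopens
   separate points and form a base; and any group topology making [alpha] continuous
   already contains all the sets [{h | h(B) = A}], which gives t-exactness. *)
From Stdlib Require Import List Bool Classical ClassicalEpsilon FunctionalExtensionality
  PropExtensionality ProofIrrelevance.
Import ListNotations.

Lemma set_ext {X} (A B : set X) : (forall x, A x <-> B x) -> A = B.
Proof.
  intro H. apply functional_extensionality; intro x.
  apply propositional_extensionality; auto.
Qed.

Lemma open_ext {X} (T : topology X) (A B : set X) :
  (forall x, A x <-> B x) -> T A -> T B.
Proof. intros H HA. rewrite <- (set_ext A B H). exact HA. Qed.

Lemma list_choice {A B} (R : A -> B -> Prop) (l : list A) :
  (forall a, In a l -> exists b, R a b) ->
  exists lb, (forall a, In a l -> exists b, In b lb /\ R a b) /\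
             (forall b, In b lb -> exists a, In a l /\ R a b).
Proof.
  induction l as [|a l IH]; intro H.
  - exists []. split; intros ? [].
  - destruct (H a (or_introl eq_refl)) as [b Hb].
    destruct IH as [lb [H1 H2]]; [intros; apply H; right; auto|].
    exists (b :: lb). split.
    + intros a' [<-|Ha']; [exists b; simpl; auto|].
      destruct (H1 a' Ha') as [b' [? ?]]. exists b'; simpl; auto.
    + intros b' [<-|Hb']; [exists a; simpl; auto|].
      destruct (H2 b' Hb') as [a' [? ?]]. exists a'; simpl; auto.
Qed.

Definition bdec (P : Prop) : bool :=
  if excluded_middle_informative P then true else false.

Lemma bdec_true (P : Prop) : bdec P = true <-> P.
Proof.
  unfold bdec; destruct (excluded_middle_informative P); split; intuition congruence.
Qed.

Lemma not_true_iff (b : bool) : b <> true <-> b = false.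
Proof. destruct b; intuition congruence. Qed.

Section OpenSets.
Context {X : Type} (T : topology X) (HT : is_topology T).

Lemma open_of_local (P : set X) :
  (forall x, P x -> exists U, T U /\ U x /\ forall y, U y -> P y) -> T P.
Proof.
  intro H. destruct HT as [_ [_ Hunion]].
  apply (open_ext T (fun x => exists U, (T U /\ forall y, U y -> P y) /\ U x)).
  - intro x; split.
    + intros [U [[_ HU] Ux]]. auto.
    + intro Px. destruct (H x Px) as [U [TU [Ux HU]]]. exists U; auto.
  - apply Hunion. intros U [TU _]; exact TU.
Qed.

Lemma open_empty : T (fun _ => False).
Proof. apply open_of_local. intros x []. Qed.

Lemma open_list_inter (l : list (set X)) :
  (forall C, In C l -> T C) -> T (fun x => forall C, In C l -> C x).
Proof.
  induction l as [|C l IH]; intro H.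
  - eapply open_ext; [|exact (proj1 HT)]. intro x; simpl; tauto.
  - eapply open_ext; [|apply (proj1 (proj2 HT)) with
                         (U := C) (W := fun x => forall C, In C l -> C x)].
    + intro x; simpl; split.
      * intros [H1 H2] C' [<-|HC]; [exact H1 | exact (H2 C' HC)].
      * intro H'; split; [apply H'; left; reflexivity | intros; apply H'; right; assumption].
    + apply H; simpl; auto.
    + apply IH; intros; apply H; simpl; auto.
Qed.

Lemma clopen_list_union (l : list (set X)) :
  (forall C, In C l -> clopen T C) -> clopen T (fun x => exists C, In C l /\ C x).
Proof.
  intros H. split.
  - apply (proj2 (proj2 HT)). intros U HU; apply (H U HU).
  - eapply open_ext; [|apply (open_list_inter (map (fun C x => ~ C x) l))].
    + intro x; split.
      * intros H1 [C [HC Cx]]. apply (H1 (fun x => ~ C x)); auto. apply in_map_iff; eauto.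
      * intros H1 C' HC'. apply in_map_iff in HC'. destruct HC' as [C [<- HC]].
        intro Cx; apply H1; eauto.
    + intros C' HC'. apply in_map_iff in HC'. destruct HC' as [C [<- HC]]. apply (H C HC).
Qed.

End OpenSets.

Lemma compact_of_list {X} (T : topology X) (K : set X) (L : list X) :
  (forall y, K y -> In y L) -> compact_set T K.
Proof.
  intros HK F HF Hcov.
  assert (H : forall y, In y (filter (fun y => bdec (K y)) L) -> exists U, F U /\ U y).
  { intros y Hy. apply filter_In in Hy. apply Hcov, bdec_true, Hy. }
  destruct (list_choice (fun y U => F U /\ U y) _ H) as [lU [H1 H2]].
  exists lU. split.
  - intros U HU. destruct (H2 U HU) as [a [_ [? _]]]; auto.
  - intros x Kx. destruct (H1 x) as [U [? [? ?]]].
    + apply filter_In; split; auto. apply bdec_true; auto.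
    + exists U; auto.
Qed.

Lemma compact_discrete_list {Y} (K : set Y) :
  compact_set (discrete Y) K -> exists L, forall y, K y -> In y L.
Proof.
  intros HK. destruct (HK (fun S => exists y, S = (fun z => z = y))) as [l [Hl1 Hl2]].
  - intros; exact I.
  - intros x _. exists (fun z => z = x); eauto.
  - destruct (list_choice (fun S (y : Y) => S = (fun z => z = y)) l Hl1) as [L [HL1 _]].
    exists L. intros y Ky. destruct (Hl2 y Ky) as [S [HS Sy]].
    destruct (HL1 S HS) as [y' [Hy' ->]]. subst; auto.
Qed.

Lemma compact_image {X Y} (TX : topology X) (TY : topology Y) (d : X -> Y) :
  continuous TX TY d -> compact TX -> compact_set TY (fun y => exists x, y = d x).
Proof.
  intros Hd HC F HF Hcov.
  destruct (HC (fun S => exists U, F U /\ S = (fun x => U (d x)))) as [l [Hl1 Hl2]].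
  - intros S [U [FU ->]]. apply Hd; auto.
  - intros x _. destruct (Hcov (d x)) as [U [FU Ux]]; eauto.
    exists (fun x => U (d x)). split; eauto.
  - destruct (list_choice (fun S U => F U /\ S = (fun x => U (d x))) l Hl1) as [L [HL1 HL2]].
    exists L. split.
    + intros U HU. destruct (HL2 U HU) as [S [_ [? _]]]; auto.
    + intros y [x ->]. destruct (Hl2 x I) as [S [HS Sx]].
      destruct (HL1 S HS) as [U [HU [_ ->]]]. eauto.
Qed.
Section Clopens.
Context {X : Type} (T : topology X).

Lemma V_ext (a b : V T) : (forall x, proj1_sig a x = proj1_sig b x) -> a = b.
Proof.
  destruct a as [a Ha], b as [b Hb]; simpl; intro H.
  assert (a = b) by (apply functional_extensionality; auto). subst.
  f_equal. apply proof_irrelevance.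
Qed.

Lemma Vs_ext (f f' : Vs T) : (forall A, proj1_sig f A = proj1_sig f' A) -> f = f'.
Proof.
  destruct f as [f Hf], f' as [f' Hf']; simpl; intro H.
  assert (f = f') by (apply functional_extensionality; auto). subst.
  f_equal. apply proof_irrelevance.
Qed.

Lemma open_V_eq (A : V T) (b : bool) : T (fun x => proj1_sig A x = b).
Proof.
  destruct A as [A [HA HnA]]; simpl. destruct b; [exact HA|].
  eapply open_ext; [|exact HnA]. intro x. apply not_true_iff.
Qed.

Lemma clopen_bdec (P : set X) : clopen T P -> clopen T (fun x => bdec (P x) = true).
Proof.
  intros [H1 H2]. split.
  - eapply open_ext; [|exact H1]. intro x; rewrite bdec_true; tauto.
  - eapply open_ext; [|exact H2]. intro x; rewrite bdec_true; tauto.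
Qed.

Definition V_of_clopen (P : set X) (HP : clopen T P) : V T :=
  exist _ (fun x => bdec (P x)) (clopen_bdec P HP).

Lemma V_of_clopen_true P HP x : proj1_sig (V_of_clopen P HP) x = true <-> P x.
Proof. apply bdec_true. Qed.

Lemma V_zero_exists : is_topology T -> exists o : V T, zeroV o.
Proof.
  intro HT. assert (H : clopen T (fun _ : X => False)).
  { split; [apply open_empty; auto|]. eapply open_ext; [|exact (proj1 HT)]. intro; tauto. }
  exists (V_of_clopen _ H). intro x. apply not_true_iff. intro Hx.
  apply (V_of_clopen_true _ _ x) in Hx. exact Hx.
Qed.

Definition Vs0 : Vs T :=
  exist (fun f : V T -> bool => forall a b c, addV a b c -> f c = xorb (f a) (f b))
    (fun _ => false) (fun _ _ _ _ => eq_refl).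

Definition Vs_add (f f' : Vs T) : Vs T.
Proof.
  refine (exist _ (fun A => xorb (proj1_sig f A) (proj1_sig f' A)) _).
  intros a b c H. rewrite (proj2_sig f _ _ _ H), (proj2_sig f' _ _ _ H).
  destruct (proj1_sig f a), (proj1_sig f b), (proj1_sig f' a), (proj1_sig f' b); reflexivity.
Defined.

Lemma Vs_add_cancel (f f' : Vs T) : addVs (Vs_add f f') f' f.
Proof. intro A; simpl. destruct (proj1_sig f A), (proj1_sig f' A); reflexivity. Qed.

Hypothesis HS : stone_space T.

Lemma clopen_base (U : set X) x : T U -> U x ->
  exists A : V T, proj1_sig A x = true /\ forall y, proj1_sig A y = true -> U y.
Proof.
  intros HU Ux. destruct HS as [_ [_ [_ HZ]]].
  destruct (HZ U x HU Ux) as [C [HC [Cx HCU]]].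
  exists (V_of_clopen C HC). rewrite V_of_clopen_true.
  split; auto. intros y Hy. apply HCU, (V_of_clopen_true C HC), Hy.
Qed.

Lemma clopen_separation x y : x <> y ->
  exists A : V T, proj1_sig A x = true /\ proj1_sig A y = false.
Proof.
  intros Hxy. destruct HS as [_ [_ [HH _]]].
  destruct (HH x y Hxy) as [U [W [TU [TW [Ux [Wy Hd]]]]]].
  destruct (clopen_base U x TU Ux) as [A [Ax HAU]].
  exists A. split; auto. apply not_true_iff. intro Ay. apply (Hd y); auto.
Qed.

Lemma clopen_compact (B : set X) : clopen T B -> compact_set T B.
Proof.
  destruct HS as [_ [HC _]]. intros [HB1 HB2] F HF Hcov.
  destruct (HC (fun U => F U \/ U = (fun x => ~ B x))) as [l [Hl1 Hl2]].
  - intros U [HU| ->]; auto.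
  - intros x _. destruct (classic (B x)) as [Bx|Bx].
    + destruct (Hcov x Bx) as [U [? ?]]; eauto.
    + exists (fun x => ~ B x); auto.
  - exists (filter (fun U => bdec (F U)) l). split.
    + intros U HU. apply filter_In in HU. apply bdec_true, HU.
    + intros x Bx. destruct (Hl2 x I) as [U [HU Ux]]. exists U; split; auto.
      apply filter_In; split; auto. apply bdec_true.
      destruct (Hl1 U HU) as [?| ->]; auto. contradiction.
Qed.

(* Zero-dimensionality and compactness of [K] give finitely many clopens between
   [K] and [P]; their union is the required clopen. *)
Lemma clopen_between (K P : set X) :
  compact_set T K -> T P -> (forall x, K x -> P x) ->
  exists A : V T, (forall x, K x -> proj1_sig A x = true) /\
                  (forall x, proj1_sig A x = true -> P x).
Proof.
  intros HK HP HKP. pose proof (proj1 HS) as HT.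
  destruct (HK (fun C => clopen T C /\ forall y, C y -> P y)) as [l [Hl1 Hl2]].
  - intros U [[? _] _]; auto.
  - intros x Kx. destruct HS as [_ [_ [_ HZ]]].
    destruct (HZ P x HP (HKP x Kx)) as [A [? [? ?]]]. exists A; auto.
  - assert (HB : clopen T (fun x => exists C, In C l /\ C x)).
    { apply clopen_list_union; auto. intros C HC; apply Hl1; auto. }
    exists (V_of_clopen _ HB). split.
    + intros x Kx. apply V_of_clopen_true. destruct (Hl2 x Kx) as [C [? ?]]; eauto.
    + intros x Hx. apply V_of_clopen_true in Hx. destruct Hx as [C [HC Cx]].
      apply (proj2 (Hl1 C HC)); auto.
Qed.

End Clopens.

Lemma invH_invH {X} (g : HX X) : invH (invH g) = g.
Proof. destruct g; reflexivity. Qed.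

Section Homeomorphisms.
Context {X : Type} (T : topology X).

Lemma homeo_id : is_homeo T idH.
Proof. unfold idH; repeat split; simpl; auto; intros W HW; exact HW. Qed.

Lemma homeo_inv g : is_homeo T g -> is_homeo T (invH g).
Proof. intros [? [? [? ?]]]; unfold invH; repeat split; simpl; auto. Qed.

Lemma homeo_mul g h : is_homeo T g -> is_homeo T h -> is_homeo T (mulH g h).
Proof.
  intros [g1 [g2 [g3 g4]]] [h1 [h2 [h3 h4]]]; unfold mulH; repeat split; simpl.
  - intro x; rewrite h1; auto.
  - intro x; rewrite g2; auto.
  - intros W HW. apply (h3 _ (g3 _ HW)).
  - intros W HW. apply (g4 _ (h4 _ HW)).
Qed.

Lemma homeo_eq_inv g h : is_homeo T g -> is_homeo T h ->
  (forall x, snd g x = snd h x) -> g = h.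
Proof.
  destruct g as [g1 g2], h as [h1 h2]; simpl. intros [_ [Hg _]] [Hh _] H.
  assert (E : g2 = h2) by (apply functional_extensionality; auto). subst h2.
  f_equal. apply functional_extensionality; intro x.
  rewrite <- (Hh (g1 x)), <- H, Hg. reflexivity.
Qed.

End Homeomorphisms.

Section Actions.
Context {X : Type} (T : topology X).

Lemma clopen_preimage g (A : V T) : is_homeo T g ->
  clopen T (fun x => proj1_sig A (snd g x) = true).
Proof.
  intros [_ [_ [_ Hc]]]. destruct A as [A [H1 H2]]; simpl. split; [exact (Hc _ H1) | exact (Hc _ H2)].
Qed.

(* [alpha g A = g(A)]; the value for a non-homeomorphism [g] is the junk [A]. *)
Definition alpha (g : HX X) (A : V T) : V T :=
  match excluded_middle_informative (is_homeo T g) with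
  | left H => exist _ (fun x => proj1_sig A (snd g x)) (clopen_preimage g A H)
  | right _ => A
  end.

Lemma alpha_val g A x : is_homeo T g ->
  proj1_sig (alpha g A) x = proj1_sig A (snd g x).
Proof. intro H. unfold alpha. destruct (excluded_middle_informative _); tauto. Qed.

Lemma alpha_junk g A : ~ is_homeo T g -> alpha g A = A.
Proof. intro H. unfold alpha. destruct (excluded_middle_informative _); tauto. Qed.

Lemma alpha_hom g : is_hom addV (alpha g).
Proof.
  intros a b c H. unfold alpha. destruct (excluded_middle_informative _); auto.
  intro x; apply H.
Qed.

Lemma alpha_id A : alpha idH A = A.
Proof. apply V_ext; intro x. rewrite alpha_val by apply homeo_id. reflexivity. Qed.

Lemma alpha_mul g h A : is_homeo T g -> is_homeo T h ->
  alpha (mulH g h) A = alpha g (alpha h A).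
Proof.
  intros Hg Hh. apply V_ext; intro x.
  rewrite (alpha_val _ _ _ (homeo_mul _ _ _ Hg Hh)), !alpha_val; auto.
Qed.

Lemma alphaK g A : alpha (invH g) (alpha g A) = A.
Proof.
  destruct (classic (is_homeo T g)) as [Hg|Hg].
  - apply V_ext; intro x. rewrite alpha_val, alpha_val; auto using homeo_inv.
    simpl. f_equal. apply Hg.
  - assert (Hg' : ~ is_homeo T (invH g)).
    { intro H. apply Hg. rewrite <- invH_invH. apply homeo_inv, H. }
    rewrite !alpha_junk; auto.
Qed.

Lemma alphaKV g A : alpha g (alpha (invH g) A) = A.
Proof. rewrite <- (invH_invH g) at 1. apply alphaK. Qed.

(* [sends B A g] means [g(B) = A]. *)
Definition sends (B A : V T) (g : HX X) := forall x, proj1_sig A (fst g x) = proj1_sig B x.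

Definition sends_all (P : list (V T * V T)) (g : HX X) :=
  forall ba, In ba P -> sends (fst ba) (snd ba) g.

Lemma sends_alpha g B A : is_homeo T g -> sends B A g <-> alpha g B = A.
Proof.
  intros Hg. split.
  - intros H. apply V_ext; intro x. rewrite alpha_val, <- H by auto.
    f_equal. apply Hg.
  - intros <- x. rewrite alpha_val by auto. f_equal. apply Hg.
Qed.

Definition beta (g : HX X) (f : Vs T) : Vs T :=
  exist (fun f' : V T -> bool => forall a b c, addV a b c -> f' c = xorb (f' a) (f' b))
    (fun A => proj1_sig f (alpha (invH g) A))
    (fun a b c H => proj2_sig f _ _ _ (alpha_hom (invH g) a b c H)).

Lemma beta_hom g : is_hom addVs (beta g).
Proof. intros a b c H A. apply H. Qed.

Lemma beta_id f : beta idH f = f.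
Proof. apply Vs_ext; intro A. simpl. f_equal. apply alpha_id. Qed.

Lemma beta_mul g h f : is_homeo T g -> is_homeo T h ->
  beta (mulH g h) f = beta g (beta h f).
Proof.
  intros Hg Hh. apply Vs_ext; intro A. simpl. f_equal.
  apply (alpha_mul (invH h) (invH g)); apply homeo_inv; auto.
Qed.

Lemma betaK g f : beta (invH g) (beta g f) = f.
Proof. apply Vs_ext; intro A. simpl. rewrite invH_invH, alphaK. reflexivity. Qed.

Lemma betaKV g f : beta g (beta (invH g) f) = f.
Proof. rewrite <- (invH_invH g) at 1. apply betaK. Qed.

Lemma pairing_invariant g A f : wpair (alpha g A) (beta g f) = wpair A f.
Proof. unfold wpair; simpl. rewrite alphaK. reflexivity. Qed.

Definition delta (x : X) : Vs T :=
  exist (fun f : V T -> bool => forall a b c, addV a b c -> f c = xorb (f a) (f b))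
    (fun A => proj1_sig A x) (fun a b c H => H x).

Lemma delta_equivariant g x : is_homeo T g -> delta (fst g x) = beta g (delta x).
Proof.
  intro Hg. apply Vs_ext; intro A. simpl. rewrite alpha_val by (apply homeo_inv; auto).
  reflexivity.
Qed.

End Actions.

Section PointwiseTopology.
Context {X : Type} (T : topology X).

Definition Vs_basic (L : list (V T * bool)) (f : Vs T) :=
  forall ab, In ab L -> proj1_sig f (fst ab) = snd ab.

Lemma Vs_top_of_local (W : set (Vs T)) :
  (forall f, W f -> exists L, Vs_basic L f /\ forall f', Vs_basic L f' -> W f') ->
  Vs_top T W.
Proof.
  intros H f Wf. destruct (H f Wf) as [L [Lf HL]].
  exists (map (fun ab f' => proj1_sig f' (fst ab) = snd ab) L). split; [|split].
  - intros B HB. apply in_map_iff in HB. destruct HB as [[A b] [<- _]].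
    exists A, b. reflexivity.
  - intros B HB. apply in_map_iff in HB. destruct HB as [ab [<- Hab]]. apply Lf, Hab.
  - intros f' Hf'. apply HL. intros ab Hab.
    apply (Hf' (fun f' => proj1_sig f' (fst ab) = snd ab)). apply in_map_iff; eauto.
Qed.

Lemma Vs_top_local (W : set (Vs T)) f : Vs_top T W -> W f ->
  exists L, Vs_basic L f /\ forall f', Vs_basic L f' -> W f'.
Proof.
  intros HW Wf. destruct (HW f Wf) as [l [Hl1 [Hl2 Hl3]]].
  destruct (list_choice (fun B (ab : V T * bool) =>
              forall f', B f' <-> proj1_sig f' (fst ab) = snd ab) l) as [L [HL1 HL2]].
  { intros B HB. destruct (Hl1 B HB) as [A [b H]]. exists (A, b); auto. }
  exists L. split.
  - intros ab Hab. destruct (HL2 ab Hab) as [B [HB HBab]]. apply HBab, Hl2, HB.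
  - intros f' Hf'. apply Hl3. intros B HB.
    destruct (HL1 B HB) as [ab [Hab HBab]]. apply HBab, Hf', Hab.
Qed.

Lemma Vs_basic_open L : Vs_top T (Vs_basic L).
Proof. apply Vs_top_of_local. intros f Hf. exists L; auto. Qed.

Lemma beta_continuous g : continuous (Vs_top T) (Vs_top T) (beta T g).
Proof.
  intros W HW. apply Vs_top_of_local. intros f Wf.
  destruct (Vs_top_local W _ HW Wf) as [L [Lf HL]].
  exists (map (fun ab => (alpha T (invH g) (fst ab), snd ab)) L). split.
  - intros ab' Hab'. apply in_map_iff in Hab'. destruct Hab' as [ab [<- Hab]].
    exact (Lf ab Hab).
  - intros f' Hf'. apply HL. intros ab Hab.
    apply (Hf' (alpha T (invH g) (fst ab), snd ab)). apply in_map_iff; eauto.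
Qed.

Lemma delta_continuous : is_topology T -> continuous T (Vs_top T) (delta T).
Proof.
  intros HT W HW. apply open_of_local; auto. intros x Wx.
  destruct (Vs_top_local W _ HW Wx) as [L [Lx HL]].
  exists (fun y => Vs_basic L (delta T y)). split; [|split; auto].
  eapply open_ext; [|apply (open_list_inter T HT
                       (map (fun ab y => proj1_sig (fst ab) y = snd ab) L))].
  - intro y; split.
    + intros H ab Hab. apply (H (fun y => proj1_sig (fst ab) y = snd ab)).
      apply in_map_iff; eauto.
    + intros H C HC. apply in_map_iff in HC. destruct HC as [ab [<- Hab]]. apply H, Hab.
  - intros C HC. apply in_map_iff in HC. destruct HC as [ab [<- _]]. apply open_V_eq.
Qed.

Hypothesis HS : stone_space T.

Lemma delta_injective x y : delta T x = delta T y -> x = y.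
Proof.
  intros E. destruct (classic (x = y)) as [?|N]; auto. exfalso.
  destruct (clopen_separation T HS _ _ N) as [A [H1 H2]].
  pose proof (f_equal (fun f : Vs T => proj1_sig f A) E) as E'. simpl in E'. congruence.
Qed.

Lemma delta_embedding : top_embedding T (Vs_top T) (delta T).
Proof.
  split; [exact delta_injective | split; [exact (delta_continuous (proj1 HS))|]].
  intros U HU.
  exists (fun f => exists A : V T,
              (forall y, proj1_sig A y = true -> U y) /\ proj1_sig f A = true).
  split.
  - apply Vs_top_of_local. intros f [A [HA Hf]]. exists [(A, true)]. split.
    + intros ab [<-|[]]. exact Hf.
    + intros f' Hf'. exists A. split; auto. apply (Hf' (A, true)); simpl; auto.
  - intro x; split.
    + intro Ux. destruct (clopen_base T HS U x HU Ux) as [A [Ax HAU]]. exists A; auto.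
    + intros [A [HA Hx]]. apply HA, Hx.
Qed.

Lemma alpha_injective g h : is_homeo T g -> is_homeo T h ->
  (forall A, alpha T g A = alpha T h A) -> g = h.
Proof.
  intros Hg Hh H. apply (homeo_eq_inv T); auto. intro x.
  destruct (classic (snd g x = snd h x)) as [E|E]; auto. exfalso.
  destruct (clopen_separation T HS _ _ E) as [A [H1 H2]].
  pose proof (f_equal (fun B => proj1_sig B x) (H A)) as E'. simpl in E'.
  rewrite !alpha_val in E' by auto. congruence.
Qed.

End PointwiseTopology.

Section Automorphisms.
Context {Y : Type} {TY : topology Y} {addR : Y -> Y -> Y -> Prop}.

Lemma autgK (f : Aut TY addR) y : autf f (autg f y) = y.
Proof. destruct f as [p Hp]. apply (proj1 Hp). Qed.

Lemma aut_hom (f : Aut TY addR) : is_hom addR (autf f).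
Proof. destruct f as [p Hp]. apply Hp. Qed.

Lemma aut_continuous (f : Aut TY addR) : continuous TY TY (autf f).
Proof. destruct f as [p Hp]. apply Hp. Qed.

Lemma birkhoff_union zeroP (F : set (set (Aut TY addR))) :
  (forall W, F W -> birkhoff TY addR zeroP W) ->
  birkhoff TY addR zeroP (fun k => exists W, F W /\ W k).
Proof.
  intros HF f [W [FW Wf]]. destruct (HF W FW f Wf) as [K [O [HK [HO Hk]]]].
  exists K, O. split; [|split]; auto. intros k Hkf. exists W; auto.
Qed.

End Automorphisms.

Definition ia {X} (T : topology X) (g : HX X) : Aut (V_top T) addV :=
  exist _ (alpha T g, alpha T (invH g))
    (conj (alphaKV T g) (conj (alphaK T g) (conj (alpha_hom T g)
      (conj (alpha_hom T (invH g)) (conj (fun _ _ => I) (fun _ _ => I)))))).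

Definition ib {X} (T : topology X) (g : HX X) : Aut (Vs_top T) addVs :=
  exist _ (beta T g, beta T (invH g))
    (conj (betaKV T g) (conj (betaK T g) (conj (beta_hom T g)
      (conj (beta_hom T (invH g)) (conj (beta_continuous T g) (beta_continuous T (invH g))))))).

Section CompactOpenIsPointwise.
Context {X : Type} (T : topology X) (HS : stone_space T).

Definition maps_into (K U : set X) (p : HX X) := forall x, K x -> U (fst p x).

Definition co_subbasic (S : set (HX X)) :=
  exists K U, compact_set T K /\ T U /\ forall p, S p <-> maps_into K U p.

Lemma sends_maps_into B A p : sends T B A p <->
  maps_into (fun x => proj1_sig B x = true) (fun y => proj1_sig A y = true) p /\
  maps_into (fun x => proj1_sig B x = false) (fun y => proj1_sig A y = false) p.
Proof.
  split.
  - intro H; split; intros x Hx; rewrite H; auto.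
  - intros [H1 H2] x. destruct (proj1_sig B x) eqn:E; auto.
Qed.

Lemma co_subbasic_maps_into (B A : V T) (b : bool) :
  co_subbasic (maps_into (fun x => proj1_sig B x = b) (fun y => proj1_sig A y = b)).
Proof.
  exists (fun x => proj1_sig B x = b), (fun y => proj1_sig A y = b).
  split; [|split; [apply open_V_eq | reflexivity]].
  apply (clopen_compact T HS). split; [apply open_V_eq|].
  eapply open_ext; [|apply (open_V_eq T B (negb b))].
  intro x; destruct b, (proj1_sig B x); simpl; intuition congruence.
Qed.

Lemma sends_all_co_subbasic P : exists l,
  (forall S, In S l -> co_subbasic S) /\
  forall p, (forall S, In S l -> S p) <-> sends_all T P p.
Proof.
  induction P as [|[B A] P [l [Hl Hlp]]].
  - exists []. split; [intros _ []|]. intro p; split; intros _ ? [].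
  - exists (maps_into (fun x => proj1_sig B x = true) (fun y => proj1_sig A y = true)
       :: maps_into (fun x => proj1_sig B x = false) (fun y => proj1_sig A y = false) :: l).
    split.
    + intros S [<-|[<-|HS']]; auto using co_subbasic_maps_into.
    + intro p. split.
      * intros H. assert (Hl' : sends_all T P p) by (apply (proj1 (Hlp p)); intros S HS'; apply H; simpl; auto).
        intros ba [<-|Hba]; [apply sends_maps_into; split; apply H; simpl; auto | exact (Hl' ba Hba)].
      * intros H. assert (HBA : sends T B A p) by (apply (H (B, A)); simpl; auto).
        apply sends_maps_into in HBA. destruct HBA as [H1 H2].
        assert (Hl' : forall S, In S l -> S p)
          by (apply (proj2 (Hlp p)); intros ba Hba; apply H; simpl; auto).
        intros S [<-|[<-|HS']]; auto.
        apply Hl', HS'.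
Qed.

(* The clopen [B] is squeezed between [K] and [g^-1(U)]. *)
Lemma co_subbasic_sends g S : is_homeo T g -> co_subbasic S -> S g ->
  exists B : V T, forall p, sends T B (alpha T g B) p -> S p.
Proof.
  intros Hg [K [U [HK [HU HS']]]] Sg.
  destruct (clopen_between T HS K (fun y => U (fst g y)) HK) as [B [HKB HBU]].
  - apply (proj1 (proj2 (proj2 Hg))); auto.
  - apply HS', Sg.
  - exists B. intros p Hp. apply HS'. intros x Kx.
    specialize (Hp x). rewrite HKB, alpha_val in Hp by auto.
    apply HBU in Hp. rewrite (proj1 Hg) in Hp. exact Hp.
Qed.

(* Openness for the topology of pointwise convergence of the action on the discrete [V]. *)
Definition pointwise_open (G U : set (HX X)) :=
  (forall g, U g -> G g) /\
  forall g, U g -> exists P, sends_all T P g /\ forall g', G g' -> sends_all T P g' -> U g'.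

Lemma sends_all_graph g g' (L : list (V T)) : is_homeo T g' ->
  sends_all T (map (fun B => (B, alpha T g B)) L) g' <->
  forall B, In B L -> alpha T g' B = alpha T g B.
Proof.
  intro Hg'. split.
  - intros H B HB. apply (sends_alpha T); auto.
    apply (H (B, alpha T g B)), in_map_iff; eauto.
  - intros H ba Hba. apply in_map_iff in Hba. destruct Hba as [B [<- HB]].
    apply (sends_alpha T); auto.
Qed.

Lemma sends_all_graph_self g (L : list (V T)) : is_homeo T g ->
  sends_all T (map (fun B => (B, alpha T g B)) L) g.
Proof. intro Hg. apply sends_all_graph; auto. Qed.

Variable G : set (HX X).
Hypothesis HG : is_subgroup T G.

Lemma pointwise_open_G_top U : pointwise_open G U -> G_top T G U.
Proof.
  intros [HUG HU].
  set (W := fun p => exists P, sends_all T P p /\ forall g', G g' -> sends_all T P g' -> U g').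
  split; auto. exists (fun p => is_homeo T p /\ W p). split.
  - split; [intros y [? ?]; auto|]. exists W. split.
    + intros p [P [HP1 HP2]]. destruct (sends_all_co_subbasic P) as [l [Hl Hlp]].
      exists l. split; [exact Hl | split; [apply (proj2 (Hlp p)), HP1|]].
      intros y Hy. exists P. split; auto. apply (proj1 (Hlp y)), Hy.
    + intros y Hy. split; [intros [_ ?]; auto | intro; split; auto].
  - intros y Gy. split.
    + intro Uy. split; [apply (proj1 HG); auto|]. apply HU; auto.
    + intros [_ [P [HP1 HP2]]]. apply HP2; auto.
Qed.

Lemma G_top_pointwise_open U : G_top T G U -> pointwise_open G U.
Proof.
  intros [HUG [W [[_ [W' [HW' HWW']]] HUW]]]. split; auto. intros g Ug.
  assert (Hg : is_homeo T g) by (apply (proj1 HG), HUG, Ug).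
  destruct (HW' g) as [l [Hl1 [Hl2 Hl3]]].
  { apply HWW'; auto. apply HUW; auto. }
  destruct (list_choice (fun S (B : V T) => forall p, sends T B (alpha T g B) p -> S p) l)
    as [L [HL1 HL2]].
  { intros S HS'. exact (co_subbasic_sends g S Hg (Hl1 S HS') (Hl2 S HS')). }
  exists (map (fun B => (B, alpha T g B)) L). split.
  - apply sends_all_graph_self; auto.
  - intros g' Gg' Hg'. assert (Hhg' : is_homeo T g') by (apply (proj1 HG), Gg').
    apply HUW, HWW', Hl3; auto. intros S HS'. destruct (HL1 S HS') as [B [HB HSB]].
    apply HSB, (sends_alpha T); auto. apply (proj1 (sends_all_graph g g' L Hhg') Hg' B HB).
Qed.

Lemma G_top_sends_all P : G_top T G (fun g => G g /\ sends_all T P g).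
Proof.
  apply pointwise_open_G_top. split; [intros g [? _]; auto|].
  intros g [Gg Hg]. exists P. split; auto.
Qed.

End CompactOpenIsPointwise.

Section Embeddings.
Context {X : Type} (T : topology X) (HS : stone_space T).
Variable G : set (HX X).
Hypothesis HG : is_subgroup T G.

Let homeo_of g : G g -> is_homeo T g := proj1 HG g.

(* Birkhoff-open sets are closed under unions, so the union of the test sets of all
   [P] admissible for [U] is open; on the image of [G] it cuts out exactly the image of [U]. *)
Lemma open_image_by_tests {Y} {TY : topology Y} {addR : Y -> Y -> Y -> Prop} (zeroP : set Y)
    (i : HX X -> Aut TY addR) (test : Aut TY addR -> V T * V T -> Prop) :
  (forall P, birkhoff TY addR zeroP (fun k => forall ba, In ba P -> test k ba)) ->
  (forall g ba, G g -> (test (i g) ba <-> sends T (fst ba) (snd ba) g)) ->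
  forall U, G_top T G U ->
    exists W, birkhoff TY addR zeroP W /\ forall g, G g -> (U g <-> W (i g)).
Proof.
  intros Hopen Htest U HU.
  exists (fun k => exists W, (exists P, (forall g', G g' -> sends_all T P g' -> U g') /\
                                  W = fun k => forall ba, In ba P -> test k ba) /\ W k).
  split.
  - apply birkhoff_union. intros W [P [_ ->]]. apply Hopen.
  - intros g Gg. split.
    + intro Ug. destruct (G_top_pointwise_open T HS G HG U HU) as [_ HUP].
      destruct (HUP g Ug) as [P [HPg HP]].
      exists (fun k => forall ba, In ba P -> test k ba). split; [eauto|].
      intros ba Hba. apply Htest; auto.
    + intros [W [[P [HP ->]] HPg]]. apply HP; auto. intros ba Hba. apply Htest; auto.
Qed.

Lemma ia_test_open P :
  birkhoff (V_top T) addV zeroV (fun k => forall ba, In ba P -> autf k (fst ba) = snd ba).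
Proof.
  intros f Hf. exists (fun B => exists ba, In ba P /\ fst ba = B), zeroV. split; [|split].
  - apply compact_of_list with (map fst P). intros B [ba [Hba <-]]. apply in_map; auto.
  - exists zeroV. split; [exact I | split; auto].
  - intros k Hk ba Hba. destruct (Hk (fst ba)) as [[o [Zo Ho]] _]; [eauto|].
    rewrite <- (Hf ba Hba), <- (autgK f (autf k (fst ba))). f_equal.
    apply V_ext; intro x. rewrite Ho, Zo. reflexivity.
Qed.

Lemma ia_continuous W : birkhoff (V_top T) addV zeroV W ->
  G_top T G (fun g => G g /\ W (ia T g)).
Proof.
  intros HW. apply (pointwise_open_G_top T HS G HG). split; [intros g [? _]; auto|].
  intros g [Gg Wg].
  destruct (HW _ Wg) as [K [O [HK [[U0 [_ [HU0 HU0O]]] Hk]]]].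
  destruct (compact_discrete_list K HK) as [L HL].
  exists (map (fun B => (B, alpha T g B)) L). split.
  { apply sends_all_graph_self; auto. }
  intros g' Gg' Hg'. split; auto.
  pose proof (proj1 (sends_all_graph T g g' _ (homeo_of g' Gg')) Hg') as Eg'.
  destruct (V_zero_exists T (proj1 HS)) as [o Zo].
  assert (Oo : O o) by (apply HU0O, HU0, Zo).
  apply Hk. intros B KB. pose proof (Eg' B (HL B KB)) as E.
  split; exists o; split; auto; intro x; unfold autf, autg; simpl; rewrite Zo.
  - rewrite E, alphaK. reflexivity.
  - rewrite <- E, alphaK. reflexivity.
Qed.

Lemma ia_embedding : top_group_embedding G (G_top T G) (birkhoff (V_top T) addV zeroV) (ia T).
Proof.
  split; [|split; [|split]].
  - intros g h Gg Gh y. apply alpha_mul; auto.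
  - intros g h Gg Gh E. apply (alpha_injective T HS); auto.
    intro A. exact (f_equal (fun k => autf k A) E).
  - exact ia_continuous.
  - apply (open_image_by_tests zeroV (ia T) (fun k ba => autf k (fst ba) = snd ba)).
    + apply ia_test_open.
    + intros g ba Gg. symmetry. apply sends_alpha; auto.
Qed.

(* A neighbourhood of [f] in the Birkhoff topology on [Aut (Vs T)]: [K] is the compact
   [delta(X)] and [O] the preimage under [f] of a basic neighbourhood of zero. *)
Lemma ib_test_open P :
  birkhoff (Vs_top T) addVs zeroVs (fun k => forall ba : V T * V T, In ba P ->
    forall x, proj1_sig (autf k (delta T x)) (snd ba) = proj1_sig (fst ba) x).
Proof.
  intros f Hf. set (L := map (fun ba => (snd ba, false)) P).
  exists (fun y => exists x, y = delta T x), (fun o => Vs_basic T L (autf f o)).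
  split; [|split].
  - apply (compact_image T); [apply delta_continuous, (proj1 HS) | apply HS].
  - exists (fun o => Vs_basic T L (autf f o)).
    split; [apply (aut_continuous f), Vs_basic_open|]. split; auto.
    intros o Zo ab Hab. unfold L in Hab. apply in_map_iff in Hab.
    destruct Hab as [ba [<- _]]. simpl.
    assert (Eo : addVs o o o) by (intro A; rewrite Zo; reflexivity).
    pose proof (aut_hom f _ _ _ Eo (snd ba)) as E.
    destruct (proj1_sig (autf f o) (snd ba)); [discriminate|reflexivity].
  - intros k Hk ba Hba x. destruct (Hk (delta T x)) as [[o [Oo Ho]] _]; [eauto|].
    pose proof (aut_hom f _ _ _ Ho (snd ba)) as E. rewrite autgK in E.
    assert (Eo : proj1_sig (autf f o) (snd ba) = false).
    { apply (Oo (snd ba, false)). unfold L. apply in_map_iff; eauto. }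
    rewrite E, Eo, (Hf ba Hba x). reflexivity.
Qed.

Lemma ib_continuous W : birkhoff (Vs_top T) addVs zeroVs W ->
  G_top T G (fun g => G g /\ W (ib T g)).
Proof.
  intros HW. apply (pointwise_open_G_top T HS G HG). split; [intros g [? _]; auto|].
  intros g [Gg Wg].
  destruct (HW _ Wg) as [K [O [_ [[U0 [HU0 [HzU0 HU0O]]] Hk]]]].
  destruct (Vs_top_local T U0 (Vs0 T) HU0 (HzU0 (Vs0 T) (fun _ => eq_refl))) as [L [L0 HL]].
  exists (map (fun B => (B, alpha T g B)) (map fst L)). split.
  { apply sends_all_graph_self; auto. }
  intros g' Gg' Hg'. split; auto.
  pose proof (proj1 (sends_all_graph T g g' _ (homeo_of g' Gg')) Hg') as Eg'.
  assert (HO : forall o, (forall ab, In ab L -> proj1_sig o (fst ab) = false) -> O o).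
  { intros o Ho. apply HU0O, HL. intros ab Hab. rewrite Ho; auto. apply (L0 ab Hab). }
  apply Hk. intros y _. split.
  - exists (Vs_add T (autg (ib T g) (autf (ib T g') y)) y). split; [|apply Vs_add_cancel].
    apply HO. intros ab Hab. simpl.
    rewrite invH_invH, <- (Eg' (fst ab)), alphaK by (apply in_map; auto).
    apply xorb_nilpotent.
  - exists (Vs_add T (autg (ib T g') (autf (ib T g) y)) y). split; [|apply Vs_add_cancel].
    apply HO. intros ab Hab. simpl.
    rewrite invH_invH, (Eg' (fst ab)), alphaK by (apply in_map; auto).
    apply xorb_nilpotent.
Qed.

Lemma ib_embedding : top_group_embedding G (G_top T G) (birkhoff (Vs_top T) addVs zeroVs) (ib T).
Proof.
  split; [|split; [|split]].
  - intros g h Gg Gh y. apply beta_mul; auto.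
  - intros g h Gg Gh E.
    rewrite <- (invH_invH g), <- (invH_invH h). f_equal.
    apply (alpha_injective T HS); auto using homeo_inv. intro A. apply V_ext; intro x.
    exact (f_equal (fun k => proj1_sig (autf k (delta T x)) A) E).
  - exact ib_continuous.
  - apply (open_image_by_tests zeroVs (ib T) (fun k (ba : V T * V T) =>
      forall x, proj1_sig (autf k (delta T x)) (snd ba) = proj1_sig (fst ba) x)).
    + apply ib_test_open.
    + intros g ba Gg. unfold sends. simpl.
      split; intros H x; specialize (H x); rewrite alpha_val in * by (apply homeo_inv; auto);
        exact H.
Qed.

End Embeddings.

Section Birepresentation.
Context {X : Type} (T : topology X) (HS : stone_space T).
Variable G : set (HX X).
Hypothesis HG : is_subgroup T G.

Let homeo_of g : G g -> is_homeo T g := proj1 HG g.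

Lemma alpha_action_continuous : action_continuous G (G_top T G) (V_top T) (alpha T).
Proof.
  intros W _ g B [Gg WgB].
  exists (fun g' => G g' /\ sends_all T [(B, alpha T g B)] g'), (fun B' => B' = B).
  split; [apply (G_top_sends_all T HS G HG)|].
  split; [exact I|]. split; [split; auto; apply (sends_all_graph_self T g [B]), homeo_of, Gg|].
  split; [reflexivity|]. intros g' B' [Gg' Hg'] ->. split; auto.
  pose proof (proj1 (sends_alpha T g' _ _ (homeo_of g' Gg')) (Hg' _ (or_introl eq_refl))) as E.
  simpl in E. rewrite E. exact WgB.
Qed.

Lemma beta_action_continuous : action_continuous G (G_top T G) (Vs_top T) (beta T).
Proof.
  intros W HW g f [Gg Wgf].
  destruct (Vs_top_local T W _ HW Wgf) as [L [Lf HL]].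
  exists (fun g' => G g' /\ sends_all T (map (fun ab => (alpha T (invH g) (fst ab), fst ab)) L) g'),
    (Vs_basic T (map (fun ab => (alpha T (invH g) (fst ab), snd ab)) L)).
  split; [apply (G_top_sends_all T HS G HG)|]. split; [apply Vs_basic_open|].
  split; [|split].
  - split; auto. intros ba Hba. apply in_map_iff in Hba. destruct Hba as [ab [<- _]].
    apply sends_alpha; auto. apply alphaKV.
  - intros ab' Hab'. apply in_map_iff in Hab'. destruct Hab' as [ab [<- Hab]].
    exact (Lf ab Hab).
  - intros g' f' [Gg' Hg'] Hf'. split; auto. apply HL. intros ab Hab. simpl.
    assert (E : alpha T g' (alpha T (invH g) (fst ab)) = fst ab).
    { apply (sends_alpha T g' _ _ (homeo_of g' Gg')).
      apply (Hg' (alpha T (invH g) (fst ab), fst ab)), in_map_iff; eauto. }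
    rewrite <- E at 1. rewrite alphaK.
    apply (Hf' (alpha T (invH g) (fst ab), snd ab)), in_map_iff; eauto.
Qed.

(* Continuity of [alpha] at [(g, B)], with [V] discrete, makes [{g' | g'(B) = g(B)}]
   a [tau]-neighbourhood of [g]. *)
Lemma sends_all_nbhd tau : topology_on G tau ->
  action_continuous G tau (V_top T) (alpha T) ->
  forall P g, G g -> sends_all T P g ->
  exists Vg, tau Vg /\ Vg g /\ forall g', Vg g' -> G g' /\ sends_all T P g'.
Proof.
  intros [Hsub [HtG [Hinter _]]] Hcont.
  induction P as [|[B A] P IH]; intros g Gg Hg.
  - exists G. split; auto. split; auto. intros g' ?; split; auto. intros ? [].
  - destruct (IH g Gg) as [V0 [HV0 [V0g HV0']]]; [intros ba Hba; apply Hg; simpl; auto|].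
    destruct (Hcont (fun y => y = A) I g B) as [U1 [U2 [HU1 [_ [U1g [U2B HU]]]]]].
    { split; auto. apply (sends_alpha T g _ _ (homeo_of g Gg)), (Hg (B, A)); simpl; auto. }
    exists (fun x => V0 x /\ U1 x). split; [apply Hinter; auto|]. split; [split; auto|].
    intros g' [V0g' U1g']. destruct (HV0' g' V0g') as [Gg' Hg']. split; auto.
    intros ba [<-|Hba]; auto.
    apply (sends_alpha T g' _ _ (homeo_of g' Gg')), (HU g' B U1g' U2B).
Qed.

Lemma G_top_coarsest tau : topology_on G tau ->
  action_continuous G tau (V_top T) (alpha T) -> forall U, G_top T G U -> tau U.
Proof.
  intros Htau Hcont U HU. pose proof Htau as [_ [_ [_ Hunion]]].
  destruct (G_top_pointwise_open T HS G HG U HU) as [HUG HUP].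
  apply (open_ext tau (fun g => exists Vg, (tau Vg /\ forall g', Vg g' -> U g') /\ Vg g)).
  - intro g; split; [intros [Vg [[_ H] ?]]; auto|]. intro Ug.
    destruct (HUP g Ug) as [P [HPg HP]].
    destruct (sends_all_nbhd tau Htau Hcont P g (HUG g Ug) HPg) as [Vg [HVg [Vgg HVg']]].
    exists Vg. split; auto. split; auto. intros g' Vg'. apply HP; apply HVg'; auto.
  - apply Hunion. intros Vg [? _]; auto.
Qed.

Lemma alpha_beta_t_exact :
  t_exact_birepresentation G (G_top T G) (V_top T) (Vs_top T) addV addVs
    wpair (alpha T) (beta T).
Proof.
  split; [split; [|split; [|split; [|split]]]|split].
  - split; [apply alpha_id | split; [intros; apply alpha_mul; auto|]].
    intros g _. split; [apply alpha_hom | intros W _; exact I].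
  - split; [apply beta_id | split; [intros; apply beta_mul; auto|]].
    intros g _. split; [apply beta_hom | apply beta_continuous].
  - exact alpha_action_continuous.
  - exact beta_action_continuous.
  - intros g A f _. apply pairing_invariant.
  - intros g Gg Ha _. apply (alpha_injective T HS); auto using homeo_id.
    intro A. rewrite Ha, alpha_id. reflexivity.
  - intros tau [Htau _] _ _ [U [HU NU]] [Hcont _]. apply NU.
    apply (G_top_coarsest tau Htau Hcont U HU).
Qed.

End Birepresentation.

Theorem lemma4p3 (X : Type) (T : topology X) (G : set (HX X)) :
  stone_space T -> is_subgroup T G ->
  exists alpha : HX X -> V T -> V T,
    (forall g A x, G g -> proj1_sig (alpha g A) x = proj1_sig A (snd g x)) /\
  exists beta : HX X -> Vs T -> Vs T,
    (forall g f A, G g -> proj1_sig (beta g f) A = proj1_sig f (alpha (invH g) A)) /\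
  exists delta : X -> Vs T,
    (forall x A, proj1_sig (delta x) A = proj1_sig A x) /\
  (exists ia : HX X -> Aut (V_top T) addV,
     (forall g A, G g -> autf (ia g) A = alpha g A) /\
     top_group_embedding G (G_top T G) (birkhoff (V_top T) addV zeroV) ia) /\
  (top_embedding T (Vs_top T) delta /\
   forall g x, G g -> delta (fst g x) = beta g (delta x)) /\
  (action_continuous G (G_top T G) (Vs_top T) beta /\
   exists ib : HX X -> Aut (Vs_top T) addVs,
     (forall g f, G g -> autf (ib g) f = beta g f) /\
     top_group_embedding G (G_top T G) (birkhoff (Vs_top T) addVs zeroVs) ib) /\
  t_exact_birepresentation G (G_top T G) (V_top T) (Vs_top T) addV addVs
    wpair alpha beta.
Proof.
  intros HS HG. assert (Hhomeo : forall g, G g -> is_homeo T g) by apply HG.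
  exists (alpha T). split; [intros; apply alpha_val; auto|].
  exists (beta T). split; [reflexivity|].
  exists (delta T). split; [reflexivity|].
  split; [|split; [|split]].
  - exists (ia T). split; [reflexivity|]. apply ia_embedding; auto.
  - split; [apply delta_embedding; auto|]. intros; apply delta_equivariant; auto.
  - split; [apply beta_action_continuous; auto|].
    exists (ib T). split; [reflexivity|]. apply ib_embedding; auto.
  - apply alpha_beta_t_exact; auto.
Qed.
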